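(* For every $d \geq 2$, let $N(d)$ be the maximum number of mutually unbiased bases in $\mathbb{C}^d$ and let \[ B(d) = \inf\Big\{ h(\bm I) : h \in C_{\succeq 0}(U(d)) \text{ real-valued},\; h(\bm H) \leq 0 \text{ for all } \bm H \in H(d),\; \textstyle\int h\, d\nu = 1\Big\}. \] Then $N(d) \leq B(d)$.
   Context: $U(d)$ is the unitary group with identity $\bm I$ and Haar probability measure $\nu$. Orthonormal bases of $\mathbb{C}^d$ are mutually unbiased if for any two distinct bases $\mathcal B,\mathcal B'$ in the collection and any $\bm v\in\mathcal B$, $\bm w\in\mathcal B'$, $|\langle \bm v,\bm w\rangle| = 1/\sqrt d$. $H(d)$ is the set of unitary $\bm H$ with $|H_{ij}| = 1/\sqrt d$ for all $i,j$. A continuous $f$ on a compact group $G$ is positive definite ($f \in C_{\succeq 0}(G)$) if $\sum_{i,j=1}^n \overline{c_i} f(g_i^{-1}g_j) c_j \geq 0$ for all $n$, all $g_i \in G$ and $c_i \in \mathbb{C}$. *)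

From HB Require Import structures.
From mathcomp Require Import all_boot all_order all_algebra.
From mathcomp Require Import complex.
From mathcomp Require Import boolp classical_sets reals constructive_ereal ereal.
Set Implicit Arguments. Unset Strict Implicit. Unset Printing Implicit Defensive.
Import Order.TTheory GRing.Theory Num.Theory.
Local Open Scope ring_scope.
Local Open Scope complex_scope.

Section MUB.
Variable R : realType.
Local Notation C := (R[i]).

Definition unitary (d : nat) (U : 'M[C]_d) : Prop :=
  (map_mx (fun z : C => z^*) U)^T *m U = 1%:M.

Definition dotC (d : nat) (v w : 'cV[C]_d) : C :=
  \sum_(i < d) (v i 0)^* * w i 0.

Definition orthonormal_basis (d : nat) (b : 'I_d -> 'cV[C]_d) : Prop :=
  forall i j, dotC (b i) (b j) = (i == j)%:R.

Definition mutually_unbiased (d k : nat) (B : 'I_k -> 'I_d -> 'cV[C]_d) : Prop :=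
  (forall a, orthonormal_basis (B a)) /\
  (forall a b, a != b -> forall i j,
      `|dotC (B a i) (B b j)| = (sqrtC (d%:R : C))^-1).

Definition N_mub (d : nat) : \bar R :=
  ereal_sup [set (k%:R)%:E | k in [set k : nat |
     exists B : 'I_k -> 'I_d -> 'cV[C]_d, mutually_unbiased B]].

Definition hadamard (d : nat) (H : 'M[C]_d) : Prop :=
  unitary H /\ forall i j, `|H i j| = (sqrtC (d%:R : C))^-1.

Definition cont_on_U (d : nat) (f : 'M[C]_d -> R) : Prop :=
  forall U, unitary U -> forall e : R, 0 < e -> exists2 del : R, 0 < del &
    forall V, unitary V -> (forall i j, `|V i j - U i j| < del%:C) ->
      `|f V - f U| < e.

Definition pos_def (d : nat) (h : 'M[C]_d -> R) : Prop :=
  forall (n : nat) (g : 'I_n -> 'M[C]_d) (c : 'I_n -> C),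
    (forall i, unitary (g i)) ->
    0 <= \sum_(i < n) \sum_(j < n) (c i)^* * (h (invmx (g i) *m g j))%:C * c j.

(* I is the integral against the Haar probability measure nu of U(d), seen as
   a functional on continuous functions on U(d): linear, positive, normalized,
   left-invariant (by Riesz + uniqueness of Haar measure this characterizes
   f |-> \int f dnu on C(U(d))). *)
Definition haar_integral (d : nat) (I : ('M[C]_d -> R) -> R) : Prop :=
  [/\ (forall (a : R) f g, cont_on_U f -> cont_on_U g ->
          I (fun X => a * f X + g X) = a * I f + I g),
      (forall f, cont_on_U f -> (forall X, unitary X -> 0 <= f X) -> 0 <= I f),
      I (fun _ => 1) = 1 &
      (forall f g, cont_on_U f -> unitary g -> I (fun X => f (g *m X)) = I f)].

Definition B_bound (d : nat) (I : ('M[C]_d -> R) -> R) : \bar R :=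
  ereal_inf [set (h 1%:M)%:E | h in [set h : 'M[C]_d -> R |
     [/\ cont_on_U h, pos_def h,
         (forall H, hadamard H -> h H <= 0) & I h = 1]]].

End MUB.

(* The columns of the a-th basis of a family of k mutually unbiased bases form
   a unitary U_a, and U_a^-1 U_b is a complex Hadamard matrix for a <> b, so an
   admissible h satisfies h (U_a^-1 U_b) <= 0 off the diagonal.  On the other
   hand a continuous positive definite h on U(d) satisfies the Delsarte-type
   inequality (\int h) (sum_a c_a)^2 <= sum_(a,b) c_a c_b h (U_a^-1 U_b): apply
   positive definiteness to U_1, ..., U_k together with m further points of
   total weight -(sum_a c_a), integrate those points out against the Haar
   functional and let m grow.  With c = 1 and \int h = 1 this reads
   k^2 <= k h(I). *)

From HB Require Import structures.
From mathcomp Require Import all_boot all_order all_algebra.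
From mathcomp Require Import complex.
From mathcomp Require Import boolp classical_sets reals constructive_ereal ereal.
From mathcomp Require Import ring lra.
Set Implicit Arguments. Unset Strict Implicit. Unset Printing Implicit Defensive.
Import Order.TTheory GRing.Theory Num.Theory.
Local Open Scope ring_scope.
Local Open Scope complex_scope.

Section Unitary.
Variables (R : realType) (d : nat).
Local Notation C := (R[i]).
Local Notation M := ('M[C]_d).

Definition conjT (U : M) : M := (map_mx conjc U)^T.

Lemma conjTM (U V : M) : conjT (U *m V) = conjT V *m conjT U.
Proof. by rewrite /conjT (map_mxM conjc) trmx_mul. Qed.

Lemma conjTK (U : M) : conjT (conjT U) = U.
Proof. by apply/matrixP=> i j; rewrite !mxE conjcK. Qed.

Lemma conjT1 : conjT 1%:M = 1%:M.
Proof. by apply/matrixP=> i j; rewrite !mxE conjc_nat eq_sym. Qed.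

Lemma unitary_unit (U : M) : unitary U -> U \in unitmx.
Proof. by move=> /mulmx1_unit []. Qed.

Lemma unitary_inv (U : M) : unitary U -> invmx U = conjT U.
Proof.
move=> hU; rewrite -[RHS]mulmx1 -(mulmxV (unitary_unit hU)) mulmxA.
by rewrite [conjT U *m U]hU mul1mx.
Qed.

Lemma unitary1 : unitary (1%:M : M).
Proof. by rewrite /unitary -/(conjT _) conjT1 mul1mx. Qed.

Lemma unitaryM (U V : M) : unitary U -> unitary V -> unitary (U *m V).
Proof.
rewrite /unitary -!/(conjT _) => hU hV.
by rewrite conjTM mulmxA -(mulmxA (conjT V)) hU mulmx1 hV.
Qed.

Lemma unitaryV (U : M) : unitary U -> unitary (invmx U).
Proof.
move=> hU; rewrite /unitary -!/(conjT _) unitary_inv // conjTK.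
exact: mulmx1C.
Qed.

Lemma unitary_entry_le1 (U : M) i j : unitary U -> `|U i j| <= 1.
Proof.
move=> hU; have : (conjT U *m U) j j = 1 by rewrite hU mxE eqxx.
rewrite mxE => col_norm1; rewrite -(@expr_le1 _ 2) //.
rewrite -col_norm1 (eq_bigr (fun k => `|U k j| ^+ 2)); last first.
  by move=> k _; rewrite !mxE sqr_normc mulrC.
by rewrite (bigD1 i) //= lerDl sumr_ge0 // => k _; rewrite exprn_ge0.
Qed.

End Unitary.

Section Continuity.
Variables (R : realType) (d : nat).
Local Notation C := (R[i]).
Local Notation M := ('M[C]_d).

Lemma cont_const (c : R) : cont_on_U (fun _ : M => c).
Proof. by move=> U _ e e_gt0; exists 1 => // V _ _; rewrite subrr normr0. Qed.

Lemma cont_add (f g : M -> R) :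
  cont_on_U f -> cont_on_U g -> cont_on_U (fun X => f X + g X).
Proof.
move=> cf cg U hU e e_gt0; have e2_gt0 : 0 < e / 2 by rewrite divr_gt0.
have [df df_gt0 Hf] := cf U hU _ e2_gt0; have [dg dg_gt0 Hg] := cg U hU _ e2_gt0.
exists (Num.min df dg) => [|V hV VU]; first by rewrite lt_min df_gt0.
have /Hf -/(_ hV) fVU : forall i j, `|V i j - U i j| < df%:C.
  by move=> i j; rewrite (lt_le_trans (VU i j)) // lecR ge_min lexx.
have /Hg -/(_ hV) gVU : forall i j, `|V i j - U i j| < dg%:C.
  by move=> i j; rewrite (lt_le_trans (VU i j)) // lecR ge_min lexx orbT.
rewrite opprD addrACA; apply: le_lt_trans (ler_normD _ _) _.
by rewrite [e]splitr ltrD.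
Qed.

Lemma cont_scale (a : R) (f : M -> R) : cont_on_U f -> cont_on_U (fun X => a * f X).
Proof.
move=> cf U hU e e_gt0; have a1_gt0 : 0 < `|a| + 1 by rewrite ltr_wpDl.
have [del del_gt0 Hf] := cf U hU (e / (`|a| + 1)) (divr_gt0 e_gt0 a1_gt0).
exists del => // V hV VU; rewrite -mulrBr normrM.
apply: le_lt_trans (_ : _ <= `|a| * (e / (`|a| + 1))) _.
  by rewrite ler_wpM2l // ltW // Hf.
by rewrite mulrA ltr_pdivrMr // mulrC ltr_pM2l // ltrDl.
Qed.

Lemma cont_sum n (F : 'I_n -> M -> R) :
  (forall i, cont_on_U (F i)) -> cont_on_U (fun X => \sum_(i < n) F i X).
Proof.
elim: n F => [|n IHn] F cF.
  by under eq_fun do rewrite big_ord0; exact: cont_const.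
under eq_fun do rewrite big_ord_recr /=.
by apply: cont_add => //; apply: IHn.
Qed.

Lemma cont_mull (A : M) (f : M -> R) :
  unitary A -> cont_on_U f -> cont_on_U (fun X => f (A *m X)).
Proof.
move=> hA cf U hU e e_gt0; have d1_gt0 : 0 < d%:R + 1 :> R by rewrite ltr_wpDl.
have [del del_gt0 Hf] := cf _ (unitaryM hA hU) e e_gt0.
exists (del / (d%:R + 1)) => [|V hV VU]; first by rewrite divr_gt0.
apply: Hf; first exact: unitaryM.
move=> i j; rewrite !mxE -sumrB; apply: le_lt_trans (ler_norm_sum _ _ _) _.
apply: le_lt_trans (_ : _ <= \sum_(k < d) (del / (d%:R + 1))%:C) _.
  apply: ler_sum => k _; rewrite -mulrBr normrM -[X in _ <= X]mul1r.
  by rewrite ler_pM ?unitary_entry_le1 // ltW.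
rewrite sumr_const card_ord -rmorphMn ltcR -mulrnAr gtr_pMr // -mulr_natr.
by rewrite mulrC ltr_pdivrMr // mul1r ltrDl.
Qed.

End Continuity.

Lemma natmulD_ge0 (F : archiRealFieldType) (x y : F) :
  (forall m : nat, 0 <= m.+1%:R * x + y) -> 0 <= x.
Proof.
move=> H; rewrite leNgt; apply/negP => x_lt0.
have nx_gt0 : 0 < - x by rewrite oppr_gt0.
have := archi_boundP (divr_ge0 (normr_ge0 y) (ltW nx_gt0)).
rewrite ltr_pdivrMr // => y_lt.
have := H (Num.bound (`|y| / - x)); rewrite -natr1.
by move: y_lt (ler_norm y); set b := _%:R; nra.
Qed.

Definition rcons_fam T n (f : 'I_n -> T) (x : T) : 'I_n.+1 -> T :=
  fun i => if unlift ord_max i is Some j then f j else x.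

Lemma rcons_fam_widen T n (f : 'I_n -> T) x i :
  rcons_fam f x (widen_ord (leqnSn n) i) = f i.
Proof.
have -> : widen_ord (leqnSn n) i = lift ord_max i.
  by apply: val_inj; rewrite /= /bump leqNgt ltn_ord.
by rewrite /rcons_fam liftK.
Qed.

Lemma rcons_fam_max T n (f : 'I_n -> T) x : rcons_fam f x ord_max = x.
Proof. by rewrite /rcons_fam unlift_none. Qed.

Lemma sum_rcons_fam (V : nmodType) n (f : 'I_n -> V) x :
  \sum_(i < n.+1) rcons_fam f x i = \sum_(i < n) f i + x.
Proof.
by rewrite big_ord_recr rcons_fam_max; under eq_bigr do rewrite rcons_fam_widen.
Qed.

Lemma rcons_famP T (P : T -> Prop) n (f : 'I_n -> T) x :
  (forall i, P (f i)) -> P x -> forall i, P (rcons_fam f x i).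
Proof. by move=> Pf Px i; rewrite /rcons_fam; case: unlift. Qed.

Section HaarIntegral.
Variables (R : realType) (d : nat) (I : ('M[R[i]]_d -> R) -> R).
Hypothesis hI : haar_integral I.
Local Notation M := ('M[R[i]]_d).

Lemma haar_linear (a : R) f g : cont_on_U f -> cont_on_U g ->
  I (fun X => a * f X + g X) = a * I f + I g.
Proof. by case: hI => lin _ _ _; apply: lin. Qed.

Lemma haar_ge0 f : cont_on_U f -> (forall X, unitary X -> 0 <= f X) -> 0 <= I f.
Proof. by case: hI => _ ge0 _ _; apply: ge0. Qed.

Lemma haar_mull f (A : M) :
  cont_on_U f -> unitary A -> I (fun X => f (A *m X)) = I f.
Proof. by case: hI => _ _ _ inv; apply: inv. Qed.

Lemma haar0 : I (fun _ => 0) = 0.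
Proof.
have := haar_linear 1 (@cont_const _ d 0) (@cont_const _ d 0).
by rewrite mul1r addr0; set z := I _; lra.
Qed.

Lemma haar_const (c : R) : I (fun _ => c) = c.
Proof.
have := haar_linear c (@cont_const _ d 1) (@cont_const _ d 0).
by case: hI => _ _ -> _; rewrite haar0 !addr0 !mulr1.
Qed.

Lemma haar_add f g : cont_on_U f -> cont_on_U g ->
  I (fun X => f X + g X) = I f + I g.
Proof.
move=> cf cg; rewrite -[I f]mul1r -haar_linear //.
by congr I; apply: funext => X; rewrite mul1r.
Qed.

Lemma haar_scale (a : R) f : cont_on_U f -> I (fun X => a * f X) = a * I f.
Proof.
move=> cf; rewrite -[RHS]addr0 -haar0 -haar_linear //; last exact: cont_const.
by congr I; apply: funext => X; rewrite addr0.
Qed.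

Lemma haar_sum n (F : 'I_n -> M -> R) : (forall i, cont_on_U (F i)) ->
  I (fun X => \sum_(i < n) F i X) = \sum_(i < n) I (F i).
Proof.
elim: n F => [|n IHn] F cF.
  by under eq_fun do rewrite big_ord0; rewrite haar0 big_ord0.
under eq_fun do rewrite big_ord_recr /=.
rewrite big_ord_recr haar_add; [congr (_ + _) | exact: cont_sum | exact: cF].
exact: (IHn (fun i => F (widen_ord (leqnSn n) i))).
Qed.

End HaarIntegral.

Section PositiveDefinite.
Variables (R : realType) (d : nat) (h : 'M[R[i]]_d -> R).
Local Notation M := ('M[R[i]]_d).

Definition quad_form n (p : 'I_n -> M) (c : 'I_n -> R) : R :=
  \sum_(i < n) \sum_(j < n) c i * c j * h (invmx (p i) *m p j).

Hypothesis hpd : pos_def h.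

(* Testing positive definiteness at (1, g) with weights (1, 'i) gives a
   complex number whose imaginary part h g - h g^-1 must vanish. *)
Lemma pos_def_inv (g : M) : unitary g -> h (invmx g) = h g.
Proof.
move=> hg; pose p (i : 'I_2) : M := if val i == 0 then 1%:M else g.
have /hpd : forall i, unitary (p i).
  by move=> i; rewrite /p; case: ifP => _ //; exact: unitary1.
move=> /(_ (fun i => if val i == 0 then 1 else 'i)).
rewrite !big_ord_recl !big_ord0 /p /= invmx1 !mul1mx mulVmx ?unitary_unit //.
by move=> /ger0_Im; simpc => /= /eqP; rewrite mulmx1 subr_eq0 => /eqP ->.
Qed.

Lemma pos_def_swap (p x : M) : unitary p -> unitary x ->
  h (invmx x *m p) = h (invmx p *m x).
Proof.
move=> hp hx; have hpx := unitaryM (unitaryV hp) hx.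
rewrite -(pos_def_inv hpx) (unitary_inv hpx) (unitary_inv hp) (unitary_inv hx).
by rewrite conjTM conjTK.
Qed.

Lemma quad_form_ge0 n (p : 'I_n -> M) c :
  (forall i, unitary (p i)) -> 0 <= quad_form p c.
Proof.
move=> hp; have := hpd (fun i => (c i)%:C) hp.
rewrite -lecR /quad_form rmorph_sum; congr (_ <= _); apply: eq_bigr => i _.
by rewrite rmorph_sum; apply: eq_bigr => j _; simpc; rewrite mulrAC.
Qed.

Lemma quad_form_rcons n (p : 'I_n -> M) c x s :
  (forall i, unitary (p i)) -> unitary x ->
  quad_form (rcons_fam p x) (rcons_fam c s) =
  quad_form p c + \sum_(i < n) 2 * s * c i * h (invmx (p i) *m x) + s ^+ 2 * h 1%:M.
Proof.
move=> hp hx; rewrite /quad_form big_ord_recr /=.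
under eq_bigr do rewrite big_ord_recr /= !rcons_fam_widen rcons_fam_max.
under eq_bigr do under eq_bigr do rewrite !rcons_fam_widen.
rewrite big_ord_recr /= !rcons_fam_max.
under [X in _ + (X + _)]eq_bigr do rewrite !rcons_fam_widen pos_def_swap //.
rewrite big_split /= mulVmx ?unitary_unit //.
have -> : \sum_(i < n) 2 * s * c i * h (invmx (p i) *m x) =
    \sum_(i < n) c i * s * h (invmx (p i) *m x)
    + \sum_(i < n) s * c i * h (invmx (p i) *m x).
  by rewrite -big_split; apply: eq_bigr => i _ /=; ring.
ring.
Qed.

End PositiveDefinite.

Section HaarPositiveDefinite.
Variables (R : realType) (d : nat).
Variables (I : ('M[R[i]]_d -> R) -> R) (h : 'M[R[i]]_d -> R).
Hypotheses (hI : haar_integral I) (hc : cont_on_U h) (hpd : pos_def h).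
Local Notation M := ('M[R[i]]_d).

(* Positive definiteness at p_1..p_n and m more points x_1..x_m of weight s,
   with the x's integrated out one at a time: each cross term h (x_k^-1 x_l)
   and h (p_i^-1 x_l) integrates to I h by left invariance. *)
Lemma quad_form_haar_ge0 m n (p : 'I_n -> M) (c : 'I_n -> R) (s : R) :
  (forall i, unitary (p i)) ->
  0 <= quad_form h p c + 2 * s * m%:R * I h * \sum_(i < n) c i
       + s ^+ 2 * (m%:R * h 1%:M + m%:R * (m%:R - 1) * I h).
Proof.
elim: m n p c => [|m IHm] n p c hp.
  by rewrite !mulr0n !mulr0 !mul0r !addr0 mulr0 addr0 quad_form_ge0.
pose F x := \sum_(i < n) 2 * s * c i * h (invmx (p i) *m x).
have cF : cont_on_U F.
  apply: cont_sum => i; apply: cont_scale.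
  by apply: cont_mull => //; exact: unitaryV.
pose K := quad_form h p c + s ^+ 2 * h 1%:M
  + 2 * s * m%:R * I h * (\sum_(i < n) c i + s)
  + s ^+ 2 * (m%:R * h 1%:M + m%:R * (m%:R - 1) * I h).
have cFK : cont_on_U (fun x => F x + K) by apply: cont_add => //; exact: cont_const.
have /(haar_ge0 hI cFK) : forall x, unitary x -> 0 <= F x + K.
  move=> x hx; have := IHm _ (rcons_fam p x) (rcons_fam c s).
  rewrite quad_form_rcons // sum_rcons_fam.
  by move=> /(_ (rcons_famP hp hx)); rewrite /K -!addrA addrCA.
rewrite (haar_add hI) //; last exact: cont_const.
rewrite (haar_const hI) (haar_sum hI); last first.
  by move=> i; apply: cont_scale; apply: cont_mull => //; exact: unitaryV.
have hpV i : unitary (invmx (p i)) by exact: unitaryV.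
under eq_bigr => i _ do
  rewrite (haar_scale hI _ (cont_mull (hpV i) hc)) (haar_mull hI hc (hpV i)).
rewrite -mulr_suml -mulr_sumr /K -natr1.
set S := \sum_(i < n) c i; set Q := quad_form _ _ _; set A := I h; set b := h _.
set t := m%:R; lra.
Qed.

Lemma haar_mul_sqr_sum_le_quad_form n (p : 'I_n -> M) (c : 'I_n -> R) :
  (forall i, unitary (p i)) -> I h * (\sum_(i < n) c i) ^+ 2 <= quad_form h p c.
Proof.
move=> hp; rewrite -subr_ge0.
set S := \sum_(i < n) c i; set Q := quad_form h p c.
apply: (@natmulD_ge0 _ _ (S ^+ 2 * (h 1%:M - I h))) => m.
have := quad_form_haar_ge0 m.+1 c (- S / m.+1%:R) hp; rewrite -/S -/Q => H.
have m_gt0 : 0 < m.+1%:R :> R by rewrite ltr0n.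
suff -> : m.+1%:R * (Q - I h * S ^+ 2) + S ^+ 2 * (h 1%:M - I h) =
  m.+1%:R * (Q + 2 * (- S / m.+1%:R) * m.+1%:R * I h * S
   + (- S / m.+1%:R) ^+ 2 * (m.+1%:R * h 1%:M + m.+1%:R * (m.+1%:R - 1) * I h)).
  by rewrite mulr_ge0 // ltW.
by field; rewrite gt_eqF.
Qed.

Lemma card_le_pos_def_at1 k (U : 'I_k -> M) :
  (forall a, unitary (U a)) ->
  (forall a b, a != b -> h (invmx (U a) *m U b) <= 0) ->
  I h = 1 -> k%:R <= h 1%:M.
Proof.
move=> hU hoff I1.
have h1_ge0 : 0 <= h 1%:M.
  have := quad_form_ge0 hpd (fun _ : 'I_1 => 1) (fun=> unitary1 R d).
  by rewrite /quad_form !big_ord1 invmx1 mul1mx !mul1r.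
have Q_le : quad_form h U (fun=> 1) <= k%:R * h 1%:M.
  apply: le_trans (_ : _ <= \sum_(a < k) h 1%:M) _; last first.
    by rewrite sumr_const card_ord mulr_natl.
  rewrite /quad_form; apply: ler_sum => a _.
  rewrite (bigD1 a) //= mulVmx ?unitary_unit // !mul1r gerDl.
  by rewrite sumr_le0 // => b ba; rewrite mul1r hoff // eq_sym.
have := haar_mul_sqr_sum_le_quad_form (fun=> 1) hU.
rewrite I1 mul1r sumr_const card_ord => /le_trans /(_ Q_le).
have [->|k_gt0] := posnP k; first by move=> _; exact: h1_ge0.
by rewrite expr2 ler_pM2l ?ltr0n.
Qed.

End HaarPositiveDefinite.

Section MutuallyUnbiased.
Variables (R : realType) (d k : nat) (B : 'I_k -> 'I_d -> 'cV[R[i]]_d).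
Hypothesis hB : mutually_unbiased B.

Definition basis_mx (a : 'I_k) : 'M[R[i]]_d := \matrix_(i, j) B a j i 0.

Lemma conjT_basis_mxM a b i j :
  (conjT (basis_mx a) *m basis_mx b) i j = dotC (B a i) (B b j).
Proof. by rewrite !mxE; apply: eq_bigr => l _; rewrite !mxE. Qed.

Lemma basis_mx_unitary a : unitary (basis_mx a).
Proof.
by apply/matrixP => i j; rewrite conjT_basis_mxM hB.1 mxE.
Qed.

Lemma basis_mx_hadamard a b :
  a != b -> hadamard (invmx (basis_mx a) *m basis_mx b).
Proof.
move=> ab; split.
  by apply: unitaryM; [apply: unitaryV|]; exact: basis_mx_unitary.
move=> i j; rewrite unitary_inv ?conjT_basis_mxM ?hB.2 //; exact: basis_mx_unitary.
Qed.

End MutuallyUnbiased.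

Unset Implicit Arguments.
Local Close Scope complex_scope.

Theorem corollary1p9 (R : realType) (d : nat) (hd : (2 <= d)%N)
  (I : ('M[R[i]]_d -> R) -> R) (hI : haar_integral I) :
  (N_mub R d <= B_bound I)%E.
Proof.
apply: ge_ereal_sup => _ [k [B hB] <-].
apply: le_ereal_inf_tmp => _ [h [hc hpd hH I1] <-].
rewrite lee_fin.
apply: (card_le_pos_def_at1 hI hc hpd (basis_mx_unitary hB)) => // a b ab.
exact/hH/basis_mx_hadamard.
Qed.
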